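(* Let a binary-payoff collective choice problem (as in the context) satisfy the standing assumptions, and suppose its signals convey only aggregate news. Then, whatever the polarization ratio $v_\ell/v_w$, the collective choice problem is advantageously correlated, i.e. $V^G(\kappa)>0$ for every $\kappa\in\{1,\dots,\tau\}$.
   Context: Setting: $n\ge3$ odd, $\tau=(n-1)/2$; voters vote for $p^*$ or $p_*$, a policy wins iff it gets more than $\tau$ votes. A state specifies a payoff profile $V=(V_1,\dots,V_n)$ and a signal profile $S\in\mathcal S^n$, $\mathcal S=\{s^0,\dots,s^K\}$, $\mathcal M=\{s^1,\dots,s^K\}$ informative; $P$ is a probability on the finite state space, and voter $i$ privately observes $S_i$. $V_i^d$ is $i$'s payoff from $p^*$ minus that from $p_*$; $V_i^d(E)=E[V_i^d\mid E]$ for non-null $E$. Binary payoffs: $V_i^d\in\{v_w,-v_\ell\}$, $v_w,v_\ell>0$; $W_i=\{V_i^d>0\}$, $W$ = number of winners. $s^k\in\mathcal M$ is good news if $V_i^d(S_i=s^k)>0$, bad news if $<0$; $G,B$ count voters with good/bad news. Standing assumptions: $V_i^d(\text{whole space})>0$; $P$ invariant under permutations of voters; if $s_i=s^0$ then $P(V=v,S=s)=P(V=v,S_{-i}=s_{-i})P(S_i=s^0)$; if $s_i\ne s^0$ then $V_i^d(S=s)>0$ iff $V_i^d(S_i=s_i)>0$; $V_i^d(E)\ne0$ for non-null $E$; $P(B\ge1)>0$, $P(G\ge\tau)>0$. Signals convey only aggregate news if $P(V=v\mid S=s,W=w)=P(V=v\mid W=w)$ for every payoff profile $v$, signal profile $s$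 and $w$ with $P(W=w)>0$ (and $P(S=s,W=w)>0$). $V^G(\kappa)=V_i^d(G=\kappa,B=0,S_i=s^0)$; advantageous correlation means $V^G(\kappa)>0$ for all $\kappa\in\{1,\dots,\tau\}$. *)

From mathcomp Require Import all_boot all_order all_algebra all_fingroup.
Set Implicit Arguments. Unset Strict Implicit. Unset Printing Implicit Defensive.
Import Order.TTheory GRing.Theory Num.Theory.
Local Open Scope ring_scope.

Section Model.
Variables (R : realFieldType) (Omega : finType) (n K : nat).
(* V w i = (payoff of voter i from p*, payoff of voter i from p_* ) in state w.
   S w i = signal of voter i in state w; ord0 is the uninformative s^0. *)
Variable P : Omega -> R.
Variable V : Omega -> {ffun 'I_n -> R * R}.
Variable S : Omega -> {ffun 'I_n -> 'I_K.+1}.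

Definition is_prob : Prop := (forall w, 0 <= P w) /\ \sum_w P w = 1.

Definition prob (E : pred Omega) : R := \sum_(w | E w) P w.
Definition cprob (A B : pred Omega) : R :=
  prob (fun w => A w && B w) / prob B.
(* conditional expectation E[f | E] (only meaningful for non-null E) *)
Definition cexp (f : Omega -> R) (E : pred Omega) : R :=
  (\sum_(w | E w) P w * f w) / prob E.

Definition s0 : 'I_K.+1 := ord0.

Definition Vd (i : 'I_n) (w : Omega) : R := (V w i).1 - (V w i).2.
Definition VdE (i : 'I_n) (E : pred Omega) : R := cexp (Vd i) E.

Definition ev_S (s : {ffun 'I_n -> 'I_K.+1}) : pred Omega := fun w => S w == s.
Definition ev_Si (i : 'I_n) (k : 'I_K.+1) : pred Omega := fun w => S w i == k.
Definition ev_VS (v : {ffun 'I_n -> R * R}) (s : {ffun 'I_n -> 'I_K.+1}) : pred Omega := fun w => (V w == v) && (S w == s).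
Definition ev_V_Smi (v : {ffun 'I_n -> R * R}) (s : {ffun 'I_n -> 'I_K.+1}) (i : 'I_n) : pred Omega :=
  fun w => (V w == v) && [forall j, (j != i) ==> (S w j == s j)].

Definition good_news (i : 'I_n) (k : 'I_K.+1) : bool :=
  (k != s0) && (0 < VdE i (ev_Si i k)).
Definition bad_news (i : 'I_n) (k : 'I_K.+1) : bool :=
  (k != s0) && (VdE i (ev_Si i k) < 0).

Definition Gc (w : Omega) : nat := #|[set i | good_news i (S w i)]|.
Definition Bc (w : Omega) : nat := #|[set i | bad_news i (S w i)]|.
Definition Wc (w : Omega) : nat := #|[set i | 0 < Vd i w]|.

Definition binary_payoffs (vw vl : R) : Prop :=
  0 < vw /\ 0 < vl /\ forall w i, Vd i w = vw \/ Vd i w = - vl.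

Definition standing_assumptions : Prop :=
      (forall i, 0 < VdE i predT) /\
      (forall (sigma : {perm 'I_n}) (v : {ffun 'I_n -> R * R})
          (s : {ffun 'I_n -> 'I_K.+1}),
          prob (ev_VS v s) =
          prob (ev_VS [ffun i => v (sigma i)] [ffun i => s (sigma i)])) /\
      (* s^0 is independent of everything else *)
      (forall i (v : {ffun 'I_n -> R * R}) (s : {ffun 'I_n -> 'I_K.+1}),
          s i = s0 ->
          prob (ev_VS v s) = prob (ev_V_Smi v s i) * prob (ev_Si i s0)) /\
      (forall i (s : {ffun 'I_n -> 'I_K.+1}), s i != s0 -> 0 < prob (ev_S s) ->
          (0 < VdE i (ev_S s) <-> 0 < VdE i (ev_Si i (s i)))) /\
      (forall i (F : {ffun 'I_n -> R * R} -> {ffun 'I_n -> 'I_K.+1} -> bool),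
          0 < prob (fun w => F (V w) (S w)) ->
          VdE i (fun w => F (V w) (S w)) != 0) /\
      0 < prob (fun w => 1 <= Bc w)%N /\
      0 < prob (fun w => (n.-1)./2 <= Gc w)%N.

Definition aggregate_news : Prop :=
  forall (v : {ffun 'I_n -> R * R}) (s : {ffun 'I_n -> 'I_K.+1}) (m : nat),
    0 < prob (fun w => Wc w == m) ->
    0 < prob (fun w => (S w == s) && (Wc w == m)) ->
    cprob (fun w => V w == v) (fun w => (S w == s) && (Wc w == m)) =
    cprob (fun w => V w == v) (fun w => Wc w == m).

Definition ev_G (i : 'I_n) (kappa : nat) : pred Omega :=
  fun w => [&& Gc w == kappa, Bc w == 0%N & S w i == s0].
Definition VG (i : 'I_n) (kappa : nat) : R := VdE i (ev_G i kappa).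

End Model.

(* Given the number W of winners, the payoff profile is independent of the
   signal profile; and by exchangeability the transposition of voters i and j,
   which preserves W, preserves the law of the payoff profile.  Hence
   E[V_i^d; S = s] does not depend on i.  For kappa >= 1, every signal profile
   s in the event {G = kappa, B = 0, S_i = s^0} gives good news to some voter j,
   so E[V_j^d; S = s] > 0, and V^G(kappa) is a positive combination of these. *)
From mathcomp Require Import all_boot all_order all_algebra all_fingroup.
From mathcomp Require Import ring.
Set Implicit Arguments. Unset Strict Implicit. Unset Printing Implicit Defensive.
Import Order.TTheory GRing.Theory Num.Theory.
Local Open Scope ring_scope.

Section FiniteProbability.
Variables (R : realFieldType) (Omega : finType) (P : Omega -> R).

Lemma sum_by_value (T : eqType) (X : Omega -> T) (U : seq T) (A : pred Omega)
    (g : T -> R) :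
  uniq U -> (forall w, X w \in U) ->
  \sum_(w | A w) P w * g (X w) =
  \sum_(x <- U) g x * prob P (fun w => (X w == x) && A w).
Proof.
move=> uU XU; transitivity (\sum_(x <- U) \sum_(w | (X w == x) && A w) P w * g (X w)).
  rewrite (exchange_big_dep A) /=; last by move=> x w _ /andP[].
  apply: eq_bigr => w Aw; rewrite (eq_bigl (fun x => x == X w)); last first.
    by move=> x; rewrite Aw andbT eq_sym.
  by rewrite big_const_seq (count_uniq_mem _ uU) XU /= addr0.
apply: eq_bigr => x _; rewrite /prob big_distrr /=.
by apply: eq_bigr => w /andP[/eqP -> _]; rewrite mulrC.
Qed.

Lemma sum_law_involutive (T : eqType) (X : Omega -> T) (f : T -> T) (h : T -> R) :
    involutive f ->
    (forall x, prob P (fun w => X w == f x) = prob P (fun w => X w == x)) ->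
  \sum_w P w * h (f (X w)) = \sum_w P w * h (X w).
Proof.
move=> fK law_f; pose L := map X (enum Omega); pose U := undup (L ++ map f L).
have uU : uniq U := undup_uniq _.
have XU w : X w \in U by rewrite mem_undup mem_cat map_f ?mem_enum.
have fU x : x \in U -> f x \in U.
  rewrite !mem_undup !mem_cat => /orP[xL|/mapP[y yL ->]].
    by rewrite map_f ?orbT.
  by rewrite fK yL.
have pU : perm_eq U (map f U).
  apply: uniq_perm; rewrite ?(map_inj_uniq (inv_inj fK)) // => x.
  apply/idP/mapP => [xU|[y yU ->]]; last exact: fU.
  by exists (f x); rewrite ?fK ?fU.
have law_andT x : prob P (fun w => (X w == x) && true) = prob P (fun w => X w == x).
  by apply: eq_bigl => w; rewrite andbT.
rewrite (sum_by_value _ (h \o f) uU XU) (sum_by_value _ h uU XU).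
rewrite [RHS](perm_big _ pU) big_map.
by apply: eq_bigr => x _; rewrite !law_andT law_f.
Qed.

Hypothesis P_ge0 : forall w, 0 <= P w.

Lemma prob_ge0 (A : pred Omega) : 0 <= prob P A.
Proof. exact: sumr_ge0. Qed.

Lemma prob_le (A B : pred Omega) : (forall w, A w -> B w) -> prob P A <= prob P B.
Proof.
move=> AB; rewrite /prob [leLHS]big_mkcond [leRHS]big_mkcond ler_sum // => w _.
by case: (boolP (A w)) => [/AB -> //|_]; case: (B w).
Qed.

Lemma sum_eq0_of_prob_eq0 (A : pred Omega) (f : Omega -> R) :
  prob P A = 0 -> \sum_(w | A w) P w * f w = 0.
Proof.
by move=> /psumr_eq0P PA0; rewrite big1 // => w /PA0 ->; rewrite ?mul0r.
Qed.

Lemma sum_gt0_by_key (T : finType) (key : Omega -> T) (A : pred Omega)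
    (f : Omega -> R) :
    0 < prob P A ->
    (forall w0, A w0 -> 0 < prob P (fun w => A w && (key w == key w0)) ->
       0 < \sum_(w | A w && (key w == key w0)) P w * f w) ->
  0 < \sum_(w | A w) P w * f w.
Proof.
move=> PA_gt0 block_gt0; rewrite (partition_big key predT) //=.
have block_gt0_of_prob t : 0 < prob P (fun w => A w && (key w == t)) ->
    0 < \sum_(w | A w && (key w == t)) P w * f w.
  case: (pickP (fun w => A w && (key w == t))) => [w0 /andP[Aw0 /eqP <-]|t_empty].
    exact: block_gt0.
  by rewrite /prob big_pred0 ?ltxx.
have block_ge0 t : 0 <= \sum_(w | A w && (key w == t)) P w * f w.
  have [/block_gt0_of_prob/ltW //|Pt_le0] :=
    ltrP 0 (prob P (fun w => A w && (key w == t))).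
  by rewrite sum_eq0_of_prob_eq0 //; apply/eqP; rewrite eq_le Pt_le0 prob_ge0.
rewrite lt_def sumr_ge0 // andbT psumr_neq0 //.
have : prob P A != 0 by rewrite gt_eqF.
rewrite /prob (partition_big key predT) //= psumr_neq0 => [|t _]; last exact: prob_ge0.
by apply: sub_has => t /= /block_gt0_of_prob ->.
Qed.

End FiniteProbability.

Section VotingModel.
Variables (R : realFieldType) (Omega : finType) (n K : nat) (P : Omega -> R).
Variables (V : Omega -> {ffun 'I_n -> R * R}) (S : Omega -> {ffun 'I_n -> 'I_K.+1}).

Local Notation payoffs := {ffun 'I_n -> R * R}.

Definition payoff_diff (i : 'I_n) (v : payoffs) : R := (v i).1 - (v i).2.
Definition winners (v : payoffs) : nat := #|[set i | 0 < payoff_diff i v]|.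
Definition permute_voters (sigma : {perm 'I_n}) (v : payoffs) : payoffs :=
  [ffun i => v (sigma i)].

Lemma winners_permute_voters sigma v : winners (permute_voters sigma v) = winners v.
Proof.
rewrite /winners -[RHS](card_preimset _ (@perm_inj _ sigma)).
by apply: eq_card => i; rewrite !inE /payoff_diff ffunE.
Qed.

Lemma payoff_diff_tperm i j v :
  payoff_diff i (permute_voters (tperm i j) v) = payoff_diff j v.
Proof. by rewrite /payoff_diff ffunE tpermL. Qed.

Lemma permute_voters_tpermK i j : involutive (permute_voters (tperm i j)).
Proof. by move=> v; apply/ffunP => k; rewrite !ffunE tpermK. Qed.

Hypothesis exchangeable : forall (sigma : {perm 'I_n}) (v : payoffs)
  (s : {ffun 'I_n -> 'I_K.+1}),
  prob P (ev_VS V S v s) =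
  prob P (ev_VS V S [ffun i => v (sigma i)] [ffun i => s (sigma i)]).

Lemma law_permute_voters sigma v :
  prob P (fun w => V w == permute_voters sigma v) = prob P (fun w => V w == v).
Proof.
have law_by_signals u : prob P (fun w => V w == u) = \sum_s prob P (ev_VS V S u s).
  by rewrite /prob (partition_big S predT).
have permute_signals_inj :
    injective (fun s : {ffun 'I_n -> 'I_K.+1} => [ffun i => s (sigma i)]).
  move=> s1 s2 /ffunP s12; apply/ffunP => i.
  by have := s12 (sigma^-1 i)%g; rewrite !ffunE permKV.
rewrite !law_by_signals (reindex_inj permute_signals_inj) /=.
by apply: eq_bigr => s _; rewrite [RHS](exchangeable sigma).
Qed.

Lemma sum_Vd_winners_exchange (i j : 'I_n) (m : nat) :
  \sum_(w | Wc V w == m) P w * Vd V i w = \sum_(w | Wc V w == m) P w * Vd V j w.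
Proof.
pose h k v := (winners v == m)%:R * payoff_diff k v.
have sum_h k : \sum_(w | Wc V w == m) P w * Vd V k w = \sum_w P w * h k (V w).
  rewrite big_mkcond; apply: eq_bigr => w _; rewrite /h /=.
  by case: eqP => _; rewrite ?mul1r ?mul0r ?mulr0.
rewrite !sum_h -(sum_law_involutive (h i) (permute_voters_tpermK i j)
  (law_permute_voters (tperm i j))).
by apply: eq_bigr => w _; rewrite /h winners_permute_voters payoff_diff_tperm.
Qed.

Hypothesis P_ge0 : forall w, 0 <= P w.
Hypothesis aggregate : aggregate_news P V S.

Lemma sum_signal_winners_factor s (m : nat) (g : payoffs -> R) :
  \sum_(w | (S w == s) && (Wc V w == m)) P w * g (V w) =
  prob P (fun w => (S w == s) && (Wc V w == m)) / prob P (fun w => Wc V w == m)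
  * \sum_(w | Wc V w == m) P w * g (V w).
Proof.
set pSW := prob P _; set pW := prob P _.
have [pSW_gt0|pSW_le0] := ltrP 0 pSW; last first.
  have pSW0 : pSW = 0 by apply/eqP; rewrite eq_le pSW_le0 prob_ge0.
  by rewrite pSW0 !mul0r; apply: (sum_eq0_of_prob_eq0 P_ge0 (g \o V)).
have pW_gt0 : 0 < pW by apply: lt_le_trans pSW_gt0 (prob_le P_ge0 _) => w /andP[].
have VU w : V w \in undup (map V (enum Omega)) by rewrite mem_undup map_f ?mem_enum.
rewrite !(sum_by_value P _ g (undup_uniq _) VU) big_distrr; apply: eq_bigr => v _.
have := aggregate v pW_gt0 pSW_gt0; rewrite /cprob /= => cond_eq.
rewrite -(divfK (lt0r_neq0 pSW_gt0) (prob P (fun w => (V w == v) && _))) cond_eq.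
by ring.
Qed.

Lemma sum_Vd_signal_exchange (i j : 'I_n) s :
  \sum_(w | S w == s) P w * Vd V i w = \sum_(w | S w == s) P w * Vd V j w.
Proof.
have Wc_lt w : (Wc V w < n.+1)%N by rewrite ltnS -[leqRHS]card_ord max_card.
have by_winners k : \sum_(w | S w == s) P w * Vd V k w =
    \sum_(m < n.+1) \sum_(w | (S w == s) && (Wc V w == m)) P w * payoff_diff k (V w).
  rewrite (partition_big (fun w => inord (Wc V w) : 'I_n.+1) predT) //=.
  by apply: eq_bigr => m _; apply: eq_bigl => w; rewrite -(inj_eq val_inj) /= inordK.
rewrite !by_winners; apply: eq_bigr => m _.
by rewrite !sum_signal_winners_factor (sum_Vd_winners_exchange i j).
Qed.

Hypothesis own_signal_sign : forall i (s : {ffun 'I_n -> 'I_K.+1}),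
  s i != s0 K -> 0 < prob P (ev_S S s) ->
  (0 < VdE P V i (ev_S S s) <-> 0 < VdE P V i (ev_Si S i (s i))).

Lemma sum_Vd_signal_gt0 (i j : 'I_n) (s : {ffun 'I_n -> 'I_K.+1}) :
  good_news P V S j (s j) -> 0 < prob P (ev_S S s) ->
  0 < \sum_(w | S w == s) P w * Vd V i w.
Proof.
move=> /andP[sj_informative sj_good] Ps_gt0.
have := (own_signal_sign sj_informative Ps_gt0).2 sj_good.
by rewrite /VdE /cexp pmulr_lgt0 ?invr_gt0 // (sum_Vd_signal_exchange i j).
Qed.

Lemma ev_G_signals i kappa w1 w2 :
  S w1 = S w2 -> ev_G P V S i kappa w1 = ev_G P V S i kappa w2.
Proof. by move=> S12; rewrite /ev_G /Gc /Bc S12. Qed.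

Lemma ev_G_good_news i kappa w :
  (0 < kappa)%N -> ev_G P V S i kappa w -> exists j, good_news P V S j (S w j).
Proof.
move=> kappa_gt0 /and3P[/eqP Gw _ _].
have : [set j | good_news P V S j (S w j)] != set0.
  by rewrite -card_gt0 -/(Gc P V S w) Gw.
by case/set0Pn => j; rewrite inE; exists j.
Qed.

End VotingModel.

Theorem proposition6 (R : realFieldType) (Omega : finType) (n K : nat)
  (P : Omega -> R) (V : Omega -> {ffun 'I_n -> R * R})
  (S : Omega -> {ffun 'I_n -> 'I_K.+1}) (vw vl : R) :
  odd n -> (3 <= n)%N ->
  is_prob P ->
  binary_payoffs V vw vl ->
  standing_assumptions P V S ->
  aggregate_news P V S ->
  forall (i : 'I_n) (kappa : nat), (1 <= kappa <= (n.-1)./2)%N ->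
    0 < prob P (ev_G P V S i kappa) ->
    0 < VG P V S i kappa.
Proof.
move=> _ _ [P_ge0 _] _ [_ [exch [_ [sign _]]]] agg i kappa /andP[kappa_gt0 _] PG_gt0.
rewrite /VG /VdE /cexp divr_gt0 //.
apply: (sum_gt0_by_key P_ge0 (key := S) PG_gt0) => w0 Gw0 block_gt0.
have block_signal w : ev_G P V S i kappa w && (S w == S w0) = (S w == S w0).
  by case: eqP => [/ev_G_signals ->|]; rewrite ?Gw0 ?andbF.
have [j gj] := ev_G_good_news kappa_gt0 Gw0.
rewrite (eq_bigl _ _ block_signal); apply: (sum_Vd_signal_gt0 exch P_ge0 agg sign i gj).
by rewrite /prob (eq_bigl _ _ block_signal) in block_gt0.
Qed.
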